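(* Let $\mathcal{D}_\varphi\in\Delta(\Sigma^V)$ be an identity-independent signaling scheme with finite signal space $\Sigma\subset[0,1]$. Then it is persuasive if and only if (i) $\Delta_\theta=0$ for every $\theta\in\Sigma$ with $\theta>0$, and (ii) if $0\in\Sigma$, then $\Delta_0\ge0$.
   Context: Setting. $V$ is a finite set of $n$ task types and $W=(W_{u,v})_{u,v\in V}$ is a symmetric matrix with entries in $[0,1]$ and $W_{v,v}=1$; $N(v)=\{v'\ne v: W_{v,v'}>0\}$. There are $n$ agents; the type profile $t=(t_1,\dots,t_n)$ is a uniformly random bijection $[n]\to V$. An identity-independent signaling scheme is given by a distribution $\mathcal{D}_\varphi$ on $\Sigma^V$: $s=(s_v)_{v\in V}\sim\mathcal{D}_\varphi$ is drawn independently of $t$ and agent $i$ privately receives $s_{t_i}$. For agent $i$, a signal $\theta\in\Sigma$ with $\Pr[s_{t_i}=\theta]>0$ and $x\ge0$, let $Q_i(x\mid\theta)=\mathbb{E}\big[x+\sum_{v'\neq t_i}W_{t_i,v'}s_{v'}\,\big|\,s_{t_i}=\theta\big]$ (over the joint law of $t,s$). The scheme is persuasive if for every agent $i$ and every such $\theta$: $Q_i(\theta\mid\theta)\ge1$ and $\theta=\min\{x\ge0:Q_i(x\mid\theta)\ge1\}$. Slack: for $\theta\in\Sigma$, $\mathrm{Contrib}_\theta=\mathbb{E}_{s\sim\mathcal{D}_\varphi}\big[\sum_{v\in V}\mathbf 1\{s_v=\theta\}\sum_{v'\in N(v)}W_{v,v'}s_{v'}\big]$, $\mathrm{Num}_\theta=\mathbb{E}_{s\sim\mathcal{D}_\varphi}\big[\sum_{v\in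 V}\mathbf 1\{s_v=\theta\}\big]$, and $\Delta_\theta=\mathrm{Contrib}_\theta-(1-\theta)\mathrm{Num}_\theta$. *)

From HB Require Import structures.
From mathcomp Require Import all_boot all_order all_algebra.
Set Implicit Arguments. Unset Strict Implicit. Unset Printing Implicit Defensive.
Import Order.TTheory GRing.Theory Num.Theory.
Local Open Scope ring_scope.

Section Defs.
Variables (R : realFieldType) (V Sig : finType).
(* W : weight matrix on task types; sv : Sig -> R embeds the finite signal
   space Sigma (a subset of [0,1]) into the reals;
   D : the distribution D_phi on Sigma^V. *)
Variables (W : V -> V -> R) (sv : Sig -> R) (D : {ffun V -> Sig} -> R).

(* type profiles: bijections [n] -> V, n = #|V|; agent set 'I_#|V| *)
Definition profiles : {set {ffun 'I_#|V| -> V}} := [set t : {ffun 'I_#|V| -> V} | injectiveb t].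

(* expectation over the joint law of (t, s): t uniform over bijections,
   s ~ D independent of t *)
Definition jointE (F : {ffun 'I_#|V| -> V} -> {ffun V -> Sig} -> R) : R :=
  \sum_(t in profiles) \sum_(s : {ffun V -> Sig}) (#|profiles|%:R)^-1 * D s * F t s.

Definition prob_sig (i : 'I_#|V|) (th : Sig) : R :=
  jointE (fun t s => (s (t i) == th)%:R).

Definition Q (i : 'I_#|V|) (x : R) (th : Sig) : R :=
  jointE (fun t s => (s (t i) == th)%:R *
            (x + \sum_(v' | v' != t i) W (t i) v' * sv (s v'))) / prob_sig i th.

Definition persuasive : Prop :=
  forall (i : 'I_#|V|) (th : Sig), 0 < prob_sig i th ->
    1 <= Q i (sv th) th /\
    (0 <= sv th /\ 1 <= Q i (sv th) th /\
     forall x : R, 0 <= x -> 1 <= Q i x th -> sv th <= x).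

Definition nbr (v v' : V) : bool := (v' != v) && (0 < W v v').

Definition EDs (F : {ffun V -> Sig} -> R) : R := \sum_(s : {ffun V -> Sig}) D s * F s.

Definition Contrib (th : Sig) : R :=
  EDs (fun s => \sum_(v : V) (s v == th)%:R *
                  \sum_(v' | nbr v v') W v v' * sv (s v')).

Definition Num (th : Sig) : R := EDs (fun s => \sum_(v : V) (s v == th)%:R).

Definition Slack (th : Sig) : R := Contrib th - (1 - sv th) * Num th.

End Defs.

From Pilot Require Import Defs.
From HB Require Import structures.
From mathcomp Require Import all_boot all_order all_algebra.
From mathcomp Require Import perm ring lra.
Set Implicit Arguments. Unset Strict Implicit. Unset Printing Implicit Defensive.
Import Order.TTheory GRing.Theory Num.Theory.
Local Open Scope ring_scope.

(* Since the type profile is a uniformly random bijection drawn independently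
   of s, the type t_i of any agent is uniform on V and independent of s.  Hence
   Pr[s_{t_i} = θ] = Num_θ / n and Q_i(x | θ) = x + Contrib_θ / Num_θ, so that
   persuasiveness at θ says exactly θ = max(0, 1 - Contrib_θ / Num_θ); after
   multiplying by Num_θ this is conditions (i) and (ii).  A signal with
   Num_θ = 0 is never sent and has zero slack. *)

Lemma least_shift_solutionP (R : realDomainType) (a q : R) : 0 <= a ->
  (1 <= a + q /\ forall x, 0 <= x -> 1 <= x + q -> a <= x) <->
  (0 < a -> a + q = 1) /\ (a = 0 -> 1 <= a + q).
Proof.
move=> a_ge0; split=> [[a_sol a_min] | [a_pos a_zero]].
  split=> [a_gt0 | //].
  have [q_le1 | q_gt1] := leP q 1.
    have : a <= 1 - q by apply: a_min; lra.
    lra.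
  have : a <= 0 by apply: a_min; lra.
  lra.
have [a_gt0 | a_le0] := ltP 0 a.
  have a_q := a_pos a_gt0; split=> [|x x_ge0]; lra.
have a_eq0 : a = 0 by lra.
have q_ge1 := a_zero a_eq0; split=> [|x x_ge0 _]; lra.
Qed.

Section Profiles.
Variable V : finType.
Implicit Types t : {ffun 'I_#|V| -> V}.

Lemma injectiveb_tperm (v w : V) t :
  injectiveb [ffun j => tperm v w (t j)] = injectiveb t.
Proof.
apply/injectiveP/injectiveP => t_inj a b.
  by move=> tab; apply: t_inj; rewrite !ffunE tab.
by rewrite !ffunE => /perm_inj; apply: t_inj.
Qed.

Lemma card_gt0_ord (i : 'I_#|V|) : (0 < #|V|)%N.
Proof. exact: leq_ltn_trans (leq0n i) (ltn_ord i). Qed.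

Lemma enum_val_profile : [ffun j => enum_val j] \in profiles V.
Proof.
by rewrite inE; apply/injectiveP => a b; rewrite !ffunE; apply: enum_val_inj.
Qed.

Lemma sum_profiles_at_eq (R : pzSemiRingType) (i : 'I_#|V|) (v w : V) :
  \sum_(t in profiles V) ((t i == v)%:R : R) = \sum_(t in profiles V) (t i == w)%:R.
Proof.
pose swap t := [ffun j => tperm v w (t j)].
have swapK : involutive swap by move=> t; apply/ffunP => j; rewrite !ffunE tpermK.
rewrite (reindex_inj (can_inj swapK)); apply: eq_big => [t | t _].
  by rewrite !inE injectiveb_tperm.
by rewrite ffunE -[X in _ == X](tpermR v w) (inj_eq (@perm_inj _ _)).
Qed.

Lemma sum_profiles_at (R : numFieldType) (i : 'I_#|V|) (h : V -> R) :
  \sum_(t in profiles V) h (t i) = #|profiles V|%:R / #|V|%:R * \sum_v h v.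
Proof.
pose c : R := \sum_(t in profiles V) (t i == enum_val i)%:R.
have sum_at (f : V -> R) : \sum_(t in profiles V) f (t i) = c * \sum_v f v.
  transitivity (\sum_(t in profiles V) \sum_v (t i == v)%:R * f v).
    apply: eq_bigr => t _; rewrite (bigD1 (t i)) //= eqxx mul1r big1 ?addr0 //.
    by move=> v; rewrite eq_sym => /negbTE ->; rewrite mul0r.
  rewrite exchange_big mulr_sumr; apply: eq_bigr => v _.
  by rewrite -mulr_suml (sum_profiles_at_eq R i v (enum_val i)) mulrC.
have card_profiles : #|profiles V|%:R = c * #|V|%:R.
  by move: (sum_at (fun=> 1)); rewrite !sumr_const.
by rewrite sum_at card_profiles mulfK // pnatr_eq0 -lt0n card_gt0_ord.
Qed.

End Profiles.

Section Persuasion.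
Variables (R : realFieldType) (V Sig : finType).
Variables (W : V -> V -> R) (sv : Sig -> R) (D : {ffun V -> Sig} -> R).
Hypothesis W_ge0 : forall u v, 0 <= W u v.
Hypothesis sv_ge0 : forall th, 0 <= sv th.
Hypothesis D_ge0 : forall s, 0 <= D s.

Lemma jointE_at (i : 'I_#|V|) (G : V -> {ffun V -> Sig} -> R) :
  jointE D (fun t s => G (t i) s) = #|V|%:R^-1 * \sum_v EDs D (G v).
Proof.
have profiles_gt0 : (0 < #|profiles V|)%N.
  by apply/card_gt0P; exists [ffun j => enum_val j]; exact: enum_val_profile.
transitivity (#|profiles V|%:R^-1 *
              \sum_(t in profiles V) EDs D (G (t i))).
  rewrite mulr_sumr; apply: eq_bigr => t _.
  by rewrite mulr_sumr; apply: eq_bigr => s _; rewrite mulrA.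
by rewrite (sum_profiles_at i (fun v => EDs D (G v))) -mulrA mulKf // pnatr_eq0 -lt0n.
Qed.

Lemma prob_sigE (i : 'I_#|V|) (th : Sig) :
  prob_sig D i th = #|V|%:R^-1 * Defs.Num D th.
Proof.
rewrite /prob_sig (jointE_at i (fun v s => (s v == th)%:R)) /Defs.Num /EDs.
by rewrite exchange_big; congr (_ * _); apply: eq_bigr => s _; rewrite mulr_sumr.
Qed.

Lemma prob_sig_gt0 (i : 'I_#|V|) (th : Sig) :
  (0 < prob_sig D i th) = (0 < Defs.Num D th).
Proof. by rewrite prob_sigE pmulr_rgt0 // invr_gt0 ltr0n (card_gt0_ord i). Qed.

Lemma sum_nbr (v : V) (x : V -> R) :
  \sum_(v' | v' != v) W v v' * x v' = \sum_(v' | nbr W v v') W v v' * x v'.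
Proof.
rewrite (bigID (fun v' => 0 < W v v')) /= [X in _ + X]big1 ?addr0 // => v'.
case/andP=> _; rewrite -leNgt => W_le0.
have -> : W v v' = 0 by apply/eqP; rewrite eq_le W_le0 W_ge0.
by rewrite mul0r.
Qed.

Lemma jointE_payoff (i : 'I_#|V|) (x : R) (th : Sig) :
  jointE D (fun t s => (s (t i) == th)%:R *
             (x + \sum_(v' | v' != t i) W (t i) v' * sv (s v')))
  = #|V|%:R^-1 * (x * Defs.Num D th + Contrib W sv D th).
Proof.
rewrite (jointE_at i (fun v s => (s v == th)%:R *
                       (x + \sum_(v' | v' != v) W v v' * sv (s v')))).
congr (_ * _); rewrite /Defs.Num /Contrib /EDs exchange_big mulr_sumr -big_split.
apply: eq_bigr => s _; rewrite !mulr_sumr -big_split; apply: eq_bigr => v _.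
by rewrite sum_nbr /=; ring.
Qed.

Definition mean_contrib (th : Sig) : R := Contrib W sv D th / Defs.Num D th.

Lemma QE (i : 'I_#|V|) (x : R) (th : Sig) : 0 < Defs.Num D th ->
  Q W sv D i x th = x + mean_contrib th.
Proof.
move=> Num_gt0; rewrite /Q prob_sigE jointE_payoff /mean_contrib; field.
by rewrite gt_eqF // pnatr_eq0 -lt0n (card_gt0_ord i).
Qed.

Lemma Num_ge0 (th : Sig) : 0 <= Defs.Num D th.
Proof. by apply: sumr_ge0 => s _; rewrite mulr_ge0 // sumr_ge0. Qed.

Lemma Contrib_eq0 (th : Sig) : Defs.Num D th = 0 -> Contrib W sv D th = 0.
Proof.
have terms_ge0 s : 0 <= D s * \sum_v ((s v == th)%:R : R).
  by rewrite mulr_ge0 // sumr_ge0.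
move/(psumr_eq0P (fun s _ => terms_ge0 s)) => Num_terms.
rewrite /Contrib /EDs big1 // => s _.
have /eqP := Num_terms s isT.
rewrite mulf_eq0 => /orP[/eqP -> | /eqP Ns]; first by rewrite mul0r.
rewrite big1 ?mulr0 // => v _.
by rewrite (psumr_eq0P _ Ns) ?mul0r // => v' _; apply: ler0n.
Qed.

Lemma SlackE (th : Sig) : 0 < Defs.Num D th ->
  Slack W sv D th = Defs.Num D th * (sv th + mean_contrib th - 1).
Proof. by move=> Num_gt0; rewrite /Slack /mean_contrib; field; rewrite gt_eqF. Qed.

Lemma persuasiveE : persuasive W sv D <->
  forall th, 0 < Defs.Num D th ->
    1 <= sv th + mean_contrib th /\
    forall x, 0 <= x -> 1 <= x + mean_contrib th -> sv th <= x.
Proof.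
split=> [persuasive_D th Num_gt0 | sol_min i th].
  have [v _ | V_empty] := pickP (@predT V); last first.
    move: Num_gt0; rewrite /Defs.Num /EDs big1 ?ltxx // => s _.
    by rewrite big_pred0 ?mulr0.
  have /persuasive_D [_ [_ [sol min]]] : 0 < prob_sig D (enum_rank v) th.
    by rewrite prob_sig_gt0.
  move: sol min; rewrite QE // => sol min; split=> // x x_ge0.
  by rewrite -(QE (enum_rank v)) //; apply: min.
rewrite prob_sig_gt0 => /[dup] Num_gt0 /sol_min[sol min]; rewrite QE //.
split=> //; split; first exact: sv_ge0.
by split=> // x x_ge0; rewrite QE //; apply: min.
Qed.

Lemma Slack_signP (th : Sig) :
  (0 < sv th -> Slack W sv D th = 0) /\ (sv th = 0 -> 0 <= Slack W sv D th) <->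
  (0 < Defs.Num D th ->
     1 <= sv th + mean_contrib th /\
     forall x, 0 <= x -> 1 <= x + mean_contrib th -> sv th <= x).
Proof.
have [Num_gt0 | Num_le0] := ltP 0 (Defs.Num D th); last first.
  have Num0 : Defs.Num D th = 0 by apply/eqP; rewrite eq_le Num_le0 Num_ge0.
  by rewrite /Slack Num0 Contrib_eq0 // mulr0 subr0; split=> // _; rewrite ltxx.
rewrite SlackE // least_shift_solutionP // pmulr_rge0 // subr_ge0.
have slack0 : Defs.Num D th * (sv th + mean_contrib th - 1) = 0 <->
              sv th + mean_contrib th = 1.
  split=> [/eqP | ->]; last by rewrite subrr mulr0.
  by rewrite mulf_eq0 gt_eqF //= subr_eq0 => /eqP.
by split=> [[pos zero] _ | /(_ isT) [pos zero]]; split=> // sv_gt0;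
  apply/slack0; apply: pos.
Qed.

End Persuasion.

Theorem lemma3p2 (R : realFieldType) (V Sig : finType)
    (W : V -> V -> R) (sv : Sig -> R) (D : {ffun V -> Sig} -> R)
    (W_sym : forall u v, W u v = W v u)
    (W_range : forall u v, 0 <= W u v <= 1)
    (W_diag : forall v, W v v = 1)
    (sv_inj : injective sv)
    (sv_range : forall th, 0 <= sv th <= 1)
    (D_ge0 : forall s, 0 <= D s)
    (D_sum1 : \sum_(s : {ffun V -> Sig}) D s = 1) :
  persuasive W sv D <->
  ((forall th : Sig, 0 < sv th -> Slack W sv D th = 0) /\
   (forall th : Sig, sv th = 0 -> 0 <= Slack W sv D th)).
Proof.
have W_ge0 u v : 0 <= W u v by case/andP: (W_range u v).
have sv_ge0 th : 0 <= sv th by case/andP: (sv_range th).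
rewrite (persuasiveE D W_ge0 sv_ge0).
split=> [sol_min | [pos zero] th].
  by split=> th; have [] := (Slack_signP W sv_ge0 D_ge0 th).2 (sol_min th).
by apply/(Slack_signP W sv_ge0 D_ge0); split; [apply: pos | apply: zero].
Qed.
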